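(* Let $(\mathfrak g,[-,-])$ be a Lie algebra and let $\mathcal B$ be a nondegenerate commutative 2-cocycle on $(\mathfrak g,[-,-])$. Then there exists a (unique) bilinear operation $\circ:\mathfrak g\otimes\mathfrak g\to\mathfrak g$ satisfying $$\mathcal B(x\circ y,z)=\mathcal B(y,[x,z]),\qquad \forall x,y,z\in\mathfrak g,$$ and $(\mathfrak g,\circ)$ is a compatible anti-pre-Lie algebra structure on $(\mathfrak g,[-,-])$, i.e. $(\mathfrak g,\circ)$ is an anti-pre-Lie algebra and $x\circ y-y\circ x=[x,y]$ for all $x,y\in\mathfrak g$.
   Context: All vector spaces are finite-dimensional over a field $\mathbb F$ of characteristic $0$. A commutative 2-cocycle on a Lie algebra $(\mathfrak g,[-,-])$ is a symmetric bilinear form $\mathcal B$ on $\mathfrak g$ such that $\mathcal B([x,y],z)+\mathcal B([y,z],x)+\mathcal B([z,x],y)=0$ for all $x,y,z$. An anti-pre-Lie algebra is a vector space $A$ with a bilinear operation $\circ$ such that, writing $[x,y]=x\circ y-y\circ x$, for all $x,y,z\in A$: (i) $x\circ(y\circ z)-y\circ(x\circ z)=[y,x]\circ z$, and (ii) $[x,y]\circ z+[y,z]\circ x+[z,x]\circ y=0$. *)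

From HB Require Import structures.
From mathcomp Require Import all_boot all_order all_algebra.
Set Implicit Arguments. Unset Strict Implicit. Unset Printing Implicit Defensive.
Import GRing.Theory.
Local Open Scope ring_scope.

Definition bilinear_map (F : fieldType) (V W : lmodType F) (m : V -> V -> W) :=
  (forall z, linear (m ^~ z)) /\ (forall x, linear (m x)).

Definition is_lie_bracket (F : fieldType) (V : lmodType F) (br : V -> V -> V) :=
  [/\ bilinear_map br,
      (forall x, br x x = 0) &
      (forall x y z, br x (br y z) + br y (br z x) + br z (br x y) = 0)].

Definition comm_2cocycle (F : fieldType) (V : lmodType F) (br : V -> V -> V)
  (B : V -> V -> F^o) :=
  [/\ bilinear_map B,
      (forall x y, B x y = B y x) &
      (forall x y z, B (br x y) z + B (br y z) x + B (br z x) y = 0)].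

Definition nondegenerate_form (F : fieldType) (V : lmodType F) (B : V -> V -> F^o) :=
  forall x, (forall y, B x y = 0) -> x = 0.

Definition anti_pre_lie (F : fieldType) (V : lmodType F) (op : V -> V -> V) :=
  let com := fun x y => op x y - op y x in
  (forall x y z, op x (op y z) - op y (op x z) = op (com y x) z) /\
  (forall x y z, op (com x y) z + op (com y z) x + op (com z x) y = 0).

(* Nondegeneracy identifies V with its dual, so x ∘ - can be defined as the
   B-transpose of ad x, i.e. B (x ∘ y) z = B y [x, z]; every identity about ∘
   is then checked after pairing with B (-) w.  Compatibility x ∘ y - y ∘ x =
   [x, y] is the cocycle identity, and x ∘ (y ∘ z) - y ∘ (x ∘ z) = [y, x] ∘ z
   says that ad is a Lie morphism.  The cyclic identity amounts to the
   vanishing of G = sum_cyc B z [[x, y], w]: the Jacobi identity together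
   with the symmetry of (a, b, c, d) |-> B [a, b] [c, d] (a consequence of the
   cocycle identity) gives G = - G, and 2 is invertible. *)

From HB Require Import structures.
From mathcomp Require Import all_boot all_order all_algebra.
From mathcomp Require Import ring.
Set Implicit Arguments.
Unset Strict Implicit.
Unset Printing Implicit Defensive.
Import GRing.Theory.
Local Open Scope ring_scope.

Definition bilinear_of (F : fieldType) (U W : lmodType F) (f : U -> U -> W)
    (hf : bilinear_map f) : {bilinear U -> U -> W} :=
  HB.pack f (bilinear_isBilinear.Build F U U W *:%R *:%R f
               (fun z => proj1 hf z, proj2 hf)).

Section NondegenerateForm.
Variables (F : fieldType) (V : lmodType F) (B : {bilinear V -> V -> F^o}).
Hypothesis B_nondeg : nondegenerate_form B.

Lemma nondeg_form_inj u v : (forall z, B u z = B v z) -> u = v.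
Proof.
move=> eqB; apply/eqP; rewrite -subr_eq0; apply/eqP/B_nondeg => z.
by rewrite linearBl eqB subrr.
Qed.

End NondegenerateForm.

Section FormDuality.
Variables (F : fieldType) (V : vectType F) (B : {bilinear V -> V -> F^o}).
Hypothesis B_nondeg : nondegenerate_form B.

Definition form_dual v : 'Hom(V, F^o) := linfun (B v).

Lemma form_dual_is_linear : linear form_dual.
Proof.
by move=> a u v; apply/lfunP => z; rewrite add_lfunE scale_lfunE !lfunE /= linearPl.
Qed.

HB.instance Definition _ :=
  GRing.isLinear.Build F V 'Hom(V, F^o) _ form_dual form_dual_is_linear.

Lemma lker_form_dual : lker (linfun form_dual) == 0%VS.
Proof.
apply/lker0P => u v; rewrite !lfunE => /lfunP eq_uv.
by apply: (nondeg_form_inj B_nondeg) => z; have := eq_uv z; rewrite !lfunE.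
Qed.

Lemma limg_form_dual : limg (linfun form_dual) = fullv.
Proof.
apply/eqP; rewrite eqEdim subvf limg_dim_eq; last first.
  by rewrite (eqP lker_form_dual) capv0.
by rewrite !dimvf /dim /= muln1.
Qed.

Definition form_repr (f : 'Hom(V, F^o)) : V := (linfun form_dual)^-1%VF f.

Lemma form_reprE f z : B (form_repr f) z = f z.
Proof.
have := limg_lfunVK (f := linfun form_dual) (x := f).
rewrite limg_form_dual memvf lfunE => /(_ isT) {2}<-.
by rewrite /form_dual lfunE.
Qed.

Variable br : {bilinear V -> V -> V}.

Definition adjoint_product x y : V := form_repr (linfun (B y \o br x)).

Lemma adjoint_productE x y z : B (adjoint_product x y) z = B y (br x z).
Proof. by rewrite form_reprE lfunE. Qed.

End FormDuality.

Section LieBracket.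
Variables (F : fieldType) (V : lmodType F) (br : {bilinear V -> V -> V}).
Hypothesis br_alt : forall x, br x x = 0.
Hypothesis jacobi :
  forall x y z, br x (br y z) + br y (br z x) + br z (br x y) = 0.

Lemma lie_skew x y : br y x = - br x y.
Proof.
apply/eqP; rewrite -addr_eq0 addrC; apply/eqP.
by have := br_alt (x + y); rewrite linearDl !linearDr !br_alt add0r addr0.
Qed.

Lemma jacobi_left x y z : br (br x y) z + br (br y z) x + br (br z x) y = 0.
Proof. by rewrite -[RHS]oppr0 -(jacobi z x y) !opprD -!lie_skew. Qed.

Lemma ad_bracket x y z : br (br x y) z = br x (br y z) - br y (br x z).
Proof.
rewrite -[LHS]add0r -(jacobi x y z) (lie_skew (br x y) z) (lie_skew x z).
by rewrite linearNr subrK.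
Qed.

Section CommutativeCocycle.
Variable B : {bilinear V -> V -> F^o}.
Hypothesis B_sym : forall x y, B x y = B y x.
Hypothesis B_cocycle :
  forall x y z, B (br x y) z + B (br y z) x + B (br z x) y = 0.

Lemma cocycle_bracketl x y z : B (br x y) z = B y (br x z) - B x (br y z).
Proof.
rewrite -[LHS]subr0 -(B_cocycle x y z) (B_sym (br y z)) (B_sym (br z x)).
by rewrite (lie_skew x z) linearNr; ring.
Qed.

Lemma cocycle_bracket2 a b c d :
  B (br a b) (br c d) = B c (br (br a b) d) - B d (br (br a b) c).
Proof.
by rewrite B_sym cocycle_bracketl (lie_skew c) (lie_skew d) !linearNr opprK addrC.
Qed.

Lemma cocycle_cyclic_sum x y z w :
  (B z (br (br x y) w) + B x (br (br y z) w) + B y (br (br z x) w)) *+ 2 = 0.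
Proof.
pose K a b c d := B c (br (br a b) d).
have jacobi_w : K x y w z + K y z w x + K z x w y = 0.
  by rewrite /K -!linearDr jacobi_left linear0r.
have jacobi_outer a b c : K c w a b - K b w a c = - K b c a w.
  rewrite /K -linearBr -linearNr; congr (B a _).
  rewrite -[LHS]subr0 -(jacobi_left c w b) (lie_skew b w) linearNl.
  by rewrite opprD addrA subrr add0r.
have swap a b c d : K a b c d - K a b d c = K c d a b - K c d b a.
  by rewrite /K -!cocycle_bracket2 B_sym.
rewrite -/(K x y z w) -/(K y z x w) -/(K z x y w); clearbody K.
have G_opp : K x y z w + K y z x w + K z x y w
             = - (K x y z w + K y z x w + K z x y w).
  transitivity ((K x y z w - K x y w z) + (K y z x w - K y z w x)
                + (K z x y w - K z x w y)).
    by rewrite -[LHS]subr0 -jacobi_w; ring.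
  by rewrite (swap x y) (swap y z) (swap z x) !opprD -!jacobi_outer; ring.
by rewrite mulr2n {1}G_opp addNr.
Qed.

Section AdjointProduct.
Hypothesis B_nondeg : nondegenerate_form B.
Variable op : V -> V -> V.
Hypothesis opE : forall x y z, B (op x y) z = B y (br x z).

Lemma adjoint_bilinear : bilinear_map op.
Proof.
split=> [z | x] a u v; apply: (nondeg_form_inj B_nondeg) => w.
  by rewrite linearPl !opE linearPl linearPr.
by rewrite linearPl !opE linearPl.
Qed.

Lemma adjoint_unique op' :
  (forall x y z, B (op' x y) z = B y (br x z)) -> op' =2 op.
Proof.
by move=> op'E x y; apply: (nondeg_form_inj B_nondeg) => z; rewrite op'E opE.
Qed.

Lemma adjoint_commutator x y : op x y - op y x = br x y.
Proof.
by apply: (nondeg_form_inj B_nondeg) => z; rewrite linearBl !opE cocycle_bracketl.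
Qed.

Lemma adjoint_left_antiassoc x y z :
  op x (op y z) - op y (op x z) = op (br y x) z.
Proof.
apply: (nondeg_form_inj B_nondeg) => w.
by rewrite linearBl !opE ad_bracket linearBr.
Qed.

Lemma adjoint_cyclic x y z : 2%:R != 0 :> F ->
  op (br x y) z + op (br y z) x + op (br z x) y = 0.
Proof.
move=> two_neq0; apply: (nondeg_form_inj B_nondeg) => w.
rewrite !linearDl !opE linear0l; apply/eqP.
have /eqP := cocycle_cyclic_sum x y z w.
by rewrite -mulr_natr mulf_eq0 (negPf two_neq0) orbF.
Qed.

Lemma adjoint_anti_pre_lie : 2%:R != 0 :> F -> anti_pre_lie op.
Proof.
move=> two_neq0; split=> x y z; rewrite !adjoint_commutator.
  exact: adjoint_left_antiassoc.
exact: adjoint_cyclic.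
Qed.

End AdjointProduct.
End CommutativeCocycle.
End LieBracket.

Theorem theorem2p19 (F : fieldType) (V : vectType F)
  (br : V -> V -> V) (B : V -> V -> F^o) :
  [pchar F] =i pred0 ->
  is_lie_bracket br ->
  comm_2cocycle br B ->
  nondegenerate_form B ->
  exists op : V -> V -> V,
    [/\ bilinear_map op,
        (forall x y z, B (op x y) z = B y (br x z)),
        (forall op' : V -> V -> V, bilinear_map op' ->
           (forall x y z, B (op' x y) z = B y (br x z)) ->
           forall x y, op' x y = op x y),
        anti_pre_lie op &
        (forall x y, op x y - op y x = br x y)].
Proof.
move=> charF0 [br_bil br_alt jacobi] [B_bil B_sym B_cocycle] B_nondeg.
pose brL := bilinear_of br_bil; pose BL := bilinear_of B_bil.
have two_neq0 : 2%:R != 0 :> F by rewrite (pcharf0P F).1.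
have opE := adjoint_productE (B := BL) B_nondeg brL.
exists (adjoint_product BL brL); split.
- exact: adjoint_bilinear opE.
- exact: opE.
- by move=> op' _ op'E; exact: (adjoint_unique (B := BL) B_nondeg opE op'E).
- exact: (adjoint_anti_pre_lie (br := brL) br_alt jacobi (B := BL)
            B_sym B_cocycle B_nondeg opE two_neq0).
- exact: (adjoint_commutator (br := brL) br_alt (B := BL)
            B_sym B_cocycle B_nondeg opE).
Qed.
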